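(* Let $\{\bm{y}_m\}_{m=1}^N\subseteq\mathbb{R}^p$ and let $\{\bm{x}'_j\}_{j=1}^n\subseteq\mathbb{R}^p$ be pairwise distinct with $\bm{x}'_i\ne\bm{y}_m$ for all $i,m$. Define, for $\bm{x}_1,\dots,\bm{x}_n\in\mathbb{R}^p$, $h^Q(\{\bm{x}_i\};\{\bm{x}'_j\}) = \frac{2}{nN}\sum_{i=1}^n\sum_{m=1}^N\left\{\frac{\|\bm{y}_m-\bm{x}_i\|_2^2}{2\|\bm{y}_m-\bm{x}'_i\|_2} + \frac{\|\bm{y}_m-\bm{x}'_i\|_2}{2}\right\} - \frac{1}{n^2}\sum_{i=1}^n\sum_{j\ne i}\left(\|\bm{x}'_i-\bm{x}'_j\|_2 + \frac{2(\bm{x}_i-\bm{x}'_i)^T(\bm{x}'_i-\bm{x}'_j)}{\|\bm{x}'_i-\bm{x}'_j\|_2}\right).$ Then $h^Q(\cdot;\{\bm{x}'_j\})$ majorizes $\hat E$ at $\{\bm{x}'_j\}_{j=1}^n$, i.e. $h^Q(\{\bm{x}_i\};\{\bm{x}'_j\})\ge\hat E(\{\bm{x}_i\};\{\bm{y}_m\})$ for all $(\bm{x}_1,\dots,\bm{x}_n)$, with equality at $\bm{x}_i=\bm{x}'_i$. Moreover, the global minimizer of $h^Q(\cdot;\{\bm{x}'_j\})$ is given by $\bm{x}_i = \left(\sum_{m=1}^N\|\bm{x}'_i-\bm{y}_m\|_2^{-1}\right)^{-1}\left(\frac{N}{n}\sum_{j\ne i}\frac{\bm{x}'_i-\bm{x}'_j}{\|\bm{x}'_i-\bm{x}'_j\|_2}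 + \sum_{m=1}^N\frac{\bm{y}_m}{\|\bm{x}'_i-\bm{y}_m\|_2}\right),\quad i=1,\dots,n.$
   Context: $\hat E(\{\bm{x}_i\};\{\bm{y}_m\}) = \frac{2}{nN}\sum_{i=1}^n\sum_{m=1}^N\|\bm{y}_m-\bm{x}_i\|_2 - \frac{1}{n^2}\sum_{i=1}^n\sum_{j=1}^n\|\bm{x}_i-\bm{x}_j\|_2$, viewed as a function of $(\bm{x}_1,\dots,\bm{x}_n)\in(\mathbb{R}^p)^n$. *)

From HB Require Import structures.
From mathcomp Require Import all_boot all_order all_algebra.
Set Implicit Arguments. Unset Strict Implicit. Unset Printing Implicit Defensive.
Import Order.TTheory GRing.Theory Num.Theory.
Local Open Scope ring_scope.

Section Defs.
Variable R : rcfType.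
Variable p : nat.

Definition dotp (u v : 'rV[R]_p) : R := \sum_(k < p) u 0 k * v 0 k.
Definition norm2 (u : 'rV[R]_p) : R := Num.sqrt (dotp u u).

Definition Ehat (n N : nat) (x : 'I_n -> 'rV[R]_p) (y : 'I_N -> 'rV[R]_p) : R :=
  2 / (n%:R * N%:R) * (\sum_(i < n) \sum_(m < N) norm2 (y m - x i))
  - 1 / (n%:R ^+ 2) * (\sum_(i < n) \sum_(j < n) norm2 (x i - x j)).

Definition hQ (n N : nat) (y : 'I_N -> 'rV[R]_p)
    (x : 'I_n -> 'rV[R]_p) (x' : 'I_n -> 'rV[R]_p) : R :=
  2 / (n%:R * N%:R) *
    (\sum_(i < n) \sum_(m < N)
       (norm2 (y m - x i) ^+ 2 / (2 * norm2 (y m - x' i))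
        + norm2 (y m - x' i) / 2))
  - 1 / (n%:R ^+ 2) *
    (\sum_(i < n) \sum_(j < n | j != i)
       (norm2 (x' i - x' j)
        + 2 * dotp (x i - x' i) (x' i - x' j) / norm2 (x' i - x' j))).

Definition hQ_argmin (n N : nat) (y : 'I_N -> 'rV[R]_p)
    (x' : 'I_n -> 'rV[R]_p) : 'I_n -> 'rV[R]_p :=
  fun i => (\sum_(m < N) (norm2 (x' i - y m))^-1)^-1 *:
    ((N%:R / n%:R) *: (\sum_(j < n | j != i) (norm2 (x' i - x' j))^-1 *: (x' i - x' j))
     + \sum_(m < N) (norm2 (x' i - y m))^-1 *: y m).

End Defs.

(* The attraction term is majorized summand by summand by the tangent parabola
   t <= t^2 / (2b) + b / 2 of the norm at b = ||y_m - x'_i||.  The linearized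
   repulsion term, symmetrized in (i, j), becomes the sum of (x_i - x_j)^T u_ij
   over unit vectors u_ij along x'_i - x'_j, which Cauchy-Schwarz bounds by
   the sum of ||x_i - x_j||; both bounds are equalities at x = x'.  Finally
   h^Q separates into quadratics in the individual x_i with positive leading
   coefficients (sum_m ||x'_i - y_m||^-1) / (nN), so completing the square
   exhibits the stated point as the unique minimizer. *)
From HB Require Import structures.
From mathcomp Require Import all_boot all_order all_algebra.
From mathcomp Require Import ring.
From Stdlib Require Import FunctionalExtensionality.

Set Implicit Arguments.
Unset Strict Implicit.
Unset Printing Implicit Defensive.

Import Order.TTheory GRing.Theory Num.Theory.
Local Open Scope ring_scope.

Section InnerProduct.
Variables (R : rcfType) (p : nat).
Implicit Types (u v w : 'rV[R]_p) (a : R).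

Lemma dotpC u v : dotp u v = dotp v u.
Proof. by apply: eq_bigr => k _; rewrite mulrC. Qed.

Lemma dotpDl u v w : dotp (u + v) w = dotp u w + dotp v w.
Proof. by rewrite /dotp -big_split; apply: eq_bigr => k _; rewrite !mxE mulrDl. Qed.

Lemma dotpBl u v w : dotp (u - v) w = dotp u w - dotp v w.
Proof. by rewrite /dotp -sumrB; apply: eq_bigr => k _; rewrite !mxE mulrBl. Qed.

Lemma dotpZl a u w : dotp (a *: u) w = a * dotp u w.
Proof. by rewrite /dotp mulr_sumr; apply: eq_bigr => k _; rewrite !mxE mulrA. Qed.

Lemma dotp0l w : dotp 0 w = 0.
Proof. by rewrite /dotp big1 // => k _; rewrite mxE mul0r. Qed.

Lemma dotpNl u w : dotp (- u) w = - dotp u w.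
Proof. by rewrite -sub0r dotpBl dotp0l sub0r. Qed.

Lemma dotp_suml (I : Type) (r : seq I) (P : pred I) (F : I -> 'rV[R]_p) w :
  dotp (\sum_(i <- r | P i) F i) w = \sum_(i <- r | P i) dotp (F i) w.
Proof. elim/big_rec2: _ => [|i y1 y2 _ <-]; by rewrite ?dotp0l ?dotpDl. Qed.

Lemma dotpBr u v w : dotp w (u - v) = dotp w u - dotp w v.
Proof. by rewrite dotpC dotpBl !(dotpC w). Qed.

Lemma dotpNr u w : dotp w (- u) = - dotp w u.
Proof. by rewrite dotpC dotpNl dotpC. Qed.

Lemma dotp0r w : dotp w 0 = 0.
Proof. by rewrite dotpC dotp0l. Qed.

Lemma dotpp_ge0 u : 0 <= dotp u u.
Proof. by apply: sumr_ge0 => k _; rewrite -expr2 sqr_ge0. Qed.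

Lemma dotpp_eq0 u : (dotp u u == 0) = (u == 0).
Proof.
apply/idP/eqP => [|->]; last by rewrite dotp0l.
rewrite psumr_eq0 => [/allP u0|k _]; last by rewrite -expr2 sqr_ge0.
apply/rowP => k; have := u0 k (mem_index_enum k).
by rewrite /= -expr2 sqrf_eq0 mxE => /eqP.
Qed.

Lemma sqr_norm2 u : norm2 u ^+ 2 = dotp u u.
Proof. by rewrite sqr_sqrtr // dotpp_ge0. Qed.

Lemma norm2_ge0 u : 0 <= norm2 u.
Proof. exact: sqrtr_ge0. Qed.

Lemma norm2_gt0 u : (0 < norm2 u) = (u != 0).
Proof. by rewrite sqrtr_gt0 lt_def dotpp_ge0 dotpp_eq0 andbT. Qed.

Lemma norm2_0 : norm2 (0 : 'rV[R]_p) = 0.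
Proof. by rewrite /norm2 dotp0l sqrtr0. Qed.

Lemma norm2N u : norm2 (- u) = norm2 u.
Proof. by rewrite /norm2 dotpNl dotpNr opprK. Qed.

Lemma norm2_distC u v : norm2 (u - v) = norm2 (v - u).
Proof. by rewrite -norm2N opprB. Qed.

Lemma dotpp_div_norm2 u : dotp u u / norm2 u = norm2 u.
Proof.
rewrite -sqr_norm2; have [->|u0] := eqVneq (norm2 u) 0; first by rewrite invr0 mulr0.
by rewrite expr2 mulfK.
Qed.

Lemma dotp_le_norm2 u v : dotp u v <= norm2 u * norm2 v.
Proof.
have [->|u0] := eqVneq u 0; first by rewrite dotp0l norm2_0 mul0r.
have [->|v0] := eqVneq v 0; first by rewrite dotp0r norm2_0 mulr0.
have ab_gt0 : 0 < norm2 u * norm2 v by rewrite mulr_gt0 ?norm2_gt0.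
(* expanding [0 <= |b u - a v|^2] for [a = |u|], [b = |v|] gives [0 <= 2ab (ab - u.v)] *)
have : 0 <= 2 * (norm2 u * norm2 v) * (norm2 u * norm2 v - dotp u v).
  have := dotpp_ge0 (norm2 v *: u - norm2 u *: v).
  rewrite !(dotpBl, dotpBr, dotpZl, dotpC _ (_ *: _), dotpZl) -!sqr_norm2 (dotpC v u).
  by congr (_ <= _); ring.
by rewrite pmulr_rge0 ?subr_ge0 // mulr_gt0.
Qed.

Lemma dotp_div_norm2_le u v : dotp u v / norm2 v <= norm2 u.
Proof.
have [->|v0] := eqVneq v 0; first by rewrite norm2_0 invr0 mulr0 norm2_ge0.
by rewrite ler_pdivrMr ?norm2_gt0 // dotp_le_norm2.
Qed.

End InnerProduct.

Lemma ler_sqr_div_add_half (R : realFieldType) (s b : R) :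
  0 < b -> s <= s ^+ 2 / (2 * b) + b / 2.
Proof.
move=> b_gt0; rewrite -subr_ge0.
have -> : s ^+ 2 / (2 * b) + b / 2 - s = (s - b) ^+ 2 / (2 * b).
  by field; rewrite gt_eqF.
by rewrite divr_ge0 ?sqr_ge0 // mulr_ge0 // ltW.
Qed.

Lemma complete_square_wsum (R : rcfType) (p : nat) (I : finType) (w : I -> R)
    (c : I -> 'rV[R]_p) (g z v : 'rV[R]_p) :
  (\sum_i w i) *: z = \sum_i w i *: c i + g ->
  \sum_i w i * dotp (c i - v) (c i - v) - 2 * dotp g v
  = \sum_i w i * dotp (c i - z) (c i - z) - 2 * dotp g z
    + (\sum_i w i) * dotp (v - z) (v - z).
Proof.
move=> def_z.
have expand i : w i * dotp (c i - v) (c i - v) = w i * dotp (c i - z) (c i - z)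
    - 2 * dotp (w i *: (c i - z)) (v - z) + w i * dotp (v - z) (v - z).
  have -> : c i - v = (c i - z) - (v - z) by rewrite opprB addrA subrK.
  move: (c i - z) (v - z) => a e.
  by rewrite dotpBl !dotpBr dotpZl (dotpC e a); ring.
have centered : \sum_i w i *: (c i - z) = - g.
  rewrite (eq_bigr _ (fun i _ => scalerBr (w i) (c i) z)) sumrB -scaler_suml def_z.
  by rewrite opprD addrA subrr add0r.
rewrite (eq_bigr _ (fun i _ => expand i)) big_split sumrB /= -mulr_suml.
by rewrite -mulr_sumr -dotp_suml centered dotpNl dotpBr; ring.
Qed.

Section Surrogate.
Variables (R : rcfType) (p n N : nat).
Variables (y : 'I_N -> 'rV[R]_p) (x' : 'I_n -> 'rV[R]_p).
Hypothesis x'_neq_y : forall i m, x' i != y m.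

Lemma norm2_y_x'_gt0 i m : 0 < norm2 (y m - x' i).
Proof. by rewrite norm2_gt0 subr_eq0 eq_sym. Qed.

(* Summands with [x' j = x' i] vanish because [x / 0 = 0]. *)
Lemma repulsion_symmetrize (x : 'I_n -> 'rV[R]_p) :
  \sum_i \sum_(j | j != i) (norm2 (x' i - x' j)
      + 2 * dotp (x i - x' i) (x' i - x' j) / norm2 (x' i - x' j))
  = \sum_i \sum_j dotp (x i - x j) (x' i - x' j) / norm2 (x' i - x' j).
Proof.
set F := fun i j => dotp (x i - x' i) (x' i - x' j) / norm2 (x' i - x' j).
have F_antisym : \sum_i \sum_j (F i j - F j i) = 0.
  under eq_bigr do rewrite sumrB.
  by rewrite sumrB [X in _ - X]exchange_big subrr.
transitivity (\sum_i \sum_j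
    (dotp (x i - x j) (x' i - x' j) / norm2 (x' i - x' j) + (F i j - F j i))).
  apply: eq_bigr => i _; rewrite big_rmcond => [|j /negPn/eqP ->]; last first.
    by rewrite subrr norm2_0 dotp0r !(mulr0, mul0r, addr0).
  apply: eq_bigr => j _; rewrite /F -(opprB (x' i) (x' j)) norm2N dotpNr.
  have -> : x i - x j = (x i - x' i) - (x j - x' j) + (x' i - x' j).
    by rewrite addrAC opprB !addrA subrK addrNK.
  move: (x i - x' i) (x j - x' j) (x' i - x' j) => a b d.
  by rewrite dotpDl dotpBl !mulrDl dotpp_div_norm2; ring.
by under eq_bigr do rewrite big_split /=; rewrite big_split /= F_antisym addr0.
Qed.

Lemma Ehat_le_hQ (x : 'I_n -> 'rV[R]_p) : Ehat x y <= hQ y x x'.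
Proof.
rewrite /Ehat /hQ repulsion_symmetrize; apply: lerB.
  rewrite ler_wpM2l ?divr_ge0 ?mulr_ge0 //.
  apply: ler_sum => i _; apply: ler_sum => m _.
  exact/ler_sqr_div_add_half/norm2_y_x'_gt0.
rewrite ler_wpM2l ?divr_ge0 ?exprn_ge0 //.
by apply: ler_sum => i _; apply: ler_sum => j _; apply: dotp_div_norm2_le.
Qed.

Lemma hQ_diag : hQ y x' x' = Ehat x' y.
Proof.
rewrite /Ehat /hQ repulsion_symmetrize.
congr (_ * _ - _ * _); apply: eq_bigr => i _; apply: eq_bigr => m _.
  by field; rewrite gt_eqF ?norm2_y_x'_gt0.
exact: dotpp_div_norm2.
Qed.

Hypotheses (n_gt0 : (0 < n)%N) (N_gt0 : (0 < N)%N).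

Definition hQ_term (i : 'I_n) (v : 'rV[R]_p) : R :=
  2 / (n%:R * N%:R) *
    (\sum_(m < N) (norm2 (y m - v) ^+ 2 / (2 * norm2 (y m - x' i))
                   + norm2 (y m - x' i) / 2))
  - 1 / (n%:R ^+ 2) *
    (\sum_(j < n | j != i) (norm2 (x' i - x' j)
       + 2 * dotp (v - x' i) (x' i - x' j) / norm2 (x' i - x' j))).

Lemma hQ_sum_term (x : 'I_n -> 'rV[R]_p) : hQ y x x' = \sum_i hQ_term i (x i).
Proof. by rewrite /hQ !mulr_sumr -sumrB. Qed.

Definition hQ_weight (i : 'I_n) : R := \sum_(m < N) (norm2 (x' i - y m))^-1.

Definition repulsion_dir (i : 'I_n) : 'rV[R]_p :=
  \sum_(j < n | j != i) (norm2 (x' i - x' j))^-1 *: (x' i - x' j).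

Definition hQ_quad (i : 'I_n) (v : 'rV[R]_p) : R :=
  \sum_(m < N) (norm2 (x' i - y m))^-1 * dotp (y m - v) (y m - v)
  - 2 * dotp ((N%:R / n%:R) *: repulsion_dir i) v.

Lemma hQ_weight_gt0 i : 0 < hQ_weight i.
Proof.
rewrite /hQ_weight (bigD1 (Ordinal N_gt0)) //= ltr_wpDr ?sumr_ge0 //.
  by move=> m _; rewrite invr_ge0 norm2_ge0.
by rewrite invr_gt0 norm2_distC norm2_y_x'_gt0.
Qed.

Lemma hQ_term_sub i u v :
  hQ_term i v - hQ_term i u = (hQ_quad i v - hQ_quad i u) / (n%:R * N%:R).
Proof.
have attractionE w :
    \sum_(m < N) (norm2 (y m - w) ^+ 2 / (2 * norm2 (y m - x' i))
                  + norm2 (y m - x' i) / 2)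
    = (\sum_(m < N) (norm2 (x' i - y m))^-1 * dotp (y m - w) (y m - w)) / 2
      + \sum_(m < N) norm2 (y m - x' i) / 2.
  rewrite mulr_suml -big_split /=; apply: eq_bigr => m _.
  by rewrite sqr_norm2 (norm2_distC (x' i)) invfM; ring.
have repulsionE w :
    \sum_(j < n | j != i) (norm2 (x' i - x' j)
       + 2 * dotp (w - x' i) (x' i - x' j) / norm2 (x' i - x' j))
    = \sum_(j < n | j != i) norm2 (x' i - x' j)
      + 2 * (dotp (repulsion_dir i) w - dotp (repulsion_dir i) (x' i)).
  rewrite big_split /= -dotpBr dotp_suml mulr_sumr; congr (_ + _).
  by apply: eq_bigr => j _; rewrite dotpZl (dotpC (x' i - x' j)); ring.
have n_neq0 : n%:R != 0 :> R by rewrite pnatr_eq0 -lt0n.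
have N_neq0 : N%:R != 0 :> R by rewrite pnatr_eq0 -lt0n.
rewrite /hQ_term /hQ_quad !attractionE !repulsionE !dotpZl.
by field; rewrite N_neq0 n_neq0.
Qed.

Lemma hQ_termE i v :
  hQ_term i v = hQ_term i (hQ_argmin y x' i)
    + hQ_weight i / (n%:R * N%:R)
      * dotp (v - hQ_argmin y x' i) (v - hQ_argmin y x' i).
Proof.
set z := hQ_argmin y x' i.
have def_z : hQ_weight i *: z
    = \sum_(m < N) (norm2 (x' i - y m))^-1 *: y m
      + (N%:R / n%:R) *: repulsion_dir i.
  by rewrite /z /hQ_argmin scalerA divff ?gt_eqF ?hQ_weight_gt0 // scale1r addrC.
have quadE : hQ_quad i v = hQ_quad i z + hQ_weight i * dotp (v - z) (v - z).
  exact: (complete_square_wsum (w := fun m => (norm2 (x' i - y m))^-1) v def_z).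
by rewrite -[LHS](subrK (hQ_term i z)) hQ_term_sub quadE; ring.
Qed.

Lemma hQ_argminE (x : 'I_n -> 'rV[R]_p) :
  hQ y x x' = hQ y (hQ_argmin y x') x'
    + \sum_i hQ_weight i / (n%:R * N%:R)
        * dotp (x i - hQ_argmin y x' i) (x i - hQ_argmin y x' i).
Proof. by rewrite !hQ_sum_term -big_split; apply: eq_bigr => i _; apply: hQ_termE. Qed.

End Surrogate.

Theorem lemma6 (R : rcfType) (p n N : nat) (hn : (0 < n)%N) (hN : (0 < N)%N)
    (y : 'I_N -> 'rV[R]_p) (x' : 'I_n -> 'rV[R]_p)
    (hdist : injective x') (hxy : forall i m, x' i != y m) :
  (forall x : 'I_n -> 'rV[R]_p, Ehat x y <= hQ y x x')
  /\ hQ y x' x' = Ehat x' y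
  /\ (forall x : 'I_n -> 'rV[R]_p, hQ y (hQ_argmin y x') x' <= hQ y x x')
  /\ (forall x : 'I_n -> 'rV[R]_p, hQ y x x' = hQ y (hQ_argmin y x') x' -> x = hQ_argmin y x').
Proof.
have coef_gt0 i : 0 < hQ_weight y x' i / (n%:R * N%:R).
  by rewrite divr_gt0 ?hQ_weight_gt0 // mulr_gt0 ?ltr0n.
have gap_ge0 (x : 'I_n -> 'rV[R]_p) i :
    0 <= hQ_weight y x' i / (n%:R * N%:R)
         * dotp (x i - hQ_argmin y x' i) (x i - hQ_argmin y x' i).
  by rewrite mulr_ge0 ?dotpp_ge0 ?ltW.
split; first exact: Ehat_le_hQ.
split; first exact: hQ_diag.
split=> x; rewrite (hQ_argminE hxy hn hN x); first by rewrite lerDl sumr_ge0.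
move=> /eqP; rewrite -subr_eq0 addrC addKr psumr_eq0 // => /allP gap_eq0.
apply: functional_extensionality => i; apply/eqP; rewrite -subr_eq0 -dotpp_eq0.
by have := gap_eq0 i (mem_index_enum i); rewrite mulf_eq0 gt_eqF.
Qed.
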